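(* For every integer $r\ge 0$, $\mathrm{LCD}[6r+6,2] < 4r+4$.
   Context: All codes are binary linear codes, i.e. subspaces of $\mathbb{F}_2^n$; an $[n,k,d]$ code is one of length $n$, dimension $k$ and minimum Hamming distance $d$. A linear code $C$ is an LCD code if $C\cap C^\perp=\{0\}$, where $C^\perp$ is the dual with respect to the standard dot product. For positive integers $n\ge k$, $\mathrm{LCD}[n,k]$ denotes the largest $d$ such that there exists a binary $[n,k,d]$ LCD code. *)

From mathcomp Require Import all_boot all_order all_algebra.
Set Implicit Arguments. Unset Strict Implicit. Unset Printing Implicit Defensive.
Import GRing.Theory.
Local Open Scope ring_scope.

(* Binary vectors of length n are row vectors 'rV['F_2]_n.
   A binary linear [n,k] code is the row space of a k x n generator
   matrix G of rank k (full row rank). *)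

Definition wt n (v : 'rV['F_2]_n) : nat := #|[set i : 'I_n | v 0 i != 0]|.

(* Minimum distance of the code spanned by the rows of G (for linear codes,
   the minimum weight of a nonzero codeword): the largest d <= n such that
   every nonzero codeword has weight >= d. *)
Definition min_dist k n (G : 'M['F_2]_(k, n)) : nat :=
  \max_(d < n.+1 | [forall v : 'rV['F_2]_n,
          ((v <= G)%MS && (v != 0)) ==> (d <= wt v)%N]) d.

(* Dual code: kermx G^T spans { u | u *m G^T = 0 }, i.e. vectors orthogonal
   (standard dot product) to every codeword. *)
Definition is_LCD k n (G : 'M['F_2]_(k, n)) : bool :=
  (G :&: kermx G^T)%MS == 0 :> 'M['F_2]_n.

Definition has_LCD_code n k d : bool :=
  [exists G : 'M['F_2]_(k, n), [&& \rank G == k, is_LCD G & min_dist G == d]].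

Definition LCD n k : nat :=
  \max_(d < n.+1 | has_LCD_code n k d) d.

From mathcomp Require Import all_boot all_order all_algebra.
From mathcomp Require Import zify.
Set Implicit Arguments.
Unset Strict Implicit.
Unset Printing Implicit Defensive.

Import GRing.Theory.
Local Open Scope ring_scope.

(* Let [u], [v] span a binary [6m, 2] code of distance at least [4m]. In every
   coordinate, [u], [v] and [u + v] carry together at most two ones, so
   [wt u + wt v + wt (u + v) <= 12m] and all three weigh exactly [4m]. As
   [wt (x + y) = wt x + wt y - 2 |supp x :&: supp y|] and [x . y] is the parity
   of [|supp x :&: supp y|], a code with all weights divisible by 4 is
   self-orthogonal; it then meets its dual in itself and is not LCD. *)

Lemma F2_cases (a : 'F_2) : a = 0 \/ a = 1.
Proof. by case: a => [[|[|k]]] // lt_k2; [left | right]; apply/val_inj. Qed.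

Lemma F2_nat_double k : (2 * k)%:R = 0 :> 'F_2.
Proof. by rewrite -(Fp_nat_mod (isT : prime 2)) modnMr. Qed.

Section Weights.

Variable n : nat.
Implicit Types x y : 'rV['F_2]_n.

Definition overlap x y : nat := \sum_i (x 0 i * y 0 i != 0)%R.

Lemma wt_sum x : wt x = (\sum_i (x 0 i != 0)%R)%N.
Proof.
by rewrite /wt -sum1_card big_mkcond; apply: eq_bigr => i _; rewrite inE.
Qed.

Lemma wt0 : wt (0 : 'rV['F_2]_n) = 0%N.
Proof. by rewrite wt_sum big1 // => i _; rewrite mxE eqxx. Qed.

Lemma wtD x y : (wt x + wt y = wt (x + y) + 2 * overlap x y)%N.
Proof.
rewrite !wt_sum /overlap -big_split big_distrr -big_split /=.
apply: eq_bigr => i _; rewrite mxE.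
by case: (F2_cases (x 0 i)) => ->; case: (F2_cases (y 0 i)) => ->.
Qed.

(* Each coordinate of [x], [y], [x + y] reads 000, 011, 101 or 110. *)
Lemma wtD_le x y : (wt x + wt y + wt (x + y) <= 2 * n)%N.
Proof.
rewrite !wt_sum -!big_split /= -[in X in (_ <= X)%N](card_ord n) mulnC.
rewrite -sum_nat_const; apply: leq_sum => i _; rewrite mxE.
by case: (F2_cases (x 0 i)) => ->; case: (F2_cases (y 0 i)) => ->.
Qed.

Lemma dot_overlap x y : (x *m y^T) 0 0 = (overlap x y)%:R.
Proof.
rewrite mxE /overlap natr_sum; apply: eq_bigr => i _; rewrite mxE.
by case: (F2_cases (x 0 i)) => ->; case: (F2_cases (y 0 i)) => ->;
  rewrite ?mulr0 ?mulr1 ?eqxx ?oner_neq0.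
Qed.

Lemma dot_eq0_wt4 x y :
  (4 %| wt x)%N -> (4 %| wt y)%N -> (4 %| wt (x + y))%N -> (x *m y^T) 0 0 = 0.
Proof.
move=> wx wy wxy; have even_overlap : (2 %| overlap x y)%N.
  by move: (wtD x y) wx wy wxy; rewrite /dvdn; lia.
rewrite dot_overlap; case/dvdnP: even_overlap => k ->.
by rewrite mulnC F2_nat_double.
Qed.

End Weights.

Lemma wt_heavy_triple m (x y : 'rV['F_2]_(6 * m)) :
  (4 * m <= wt x)%N -> (4 * m <= wt y)%N -> (4 * m <= wt (x + y))%N ->
  [/\ wt x = (4 * m)%N, wt y = (4 * m)%N & wt (x + y) = (4 * m)%N].
Proof. by move: (wtD_le x y); split; lia. Qed.

Lemma doubly_even_self_orthogonal k n (G : 'M['F_2]_(k, n)) :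
  (forall w, (w <= G)%MS -> (4 %| wt w)%N) -> G *m G^T = 0.
Proof.
move=> wt4; apply/matrixP => i j.
have -> : (G *m G^T) i j = (row i G *m (row j G)^T) 0 0.
  by rewrite !mxE; apply: eq_bigr => l _; rewrite !mxE.
rewrite [RHS]mxE; apply: dot_eq0_wt4; apply: wt4;
  by rewrite ?addmx_sub ?row_sub.
Qed.

Lemma self_orthogonal_not_LCD k n (G : 'M['F_2]_(k, n)) :
  G != 0 -> G *m G^T = 0 -> ~~ is_LCD G.
Proof.
move=> G_neq0 /sub_kermxP/capmx_idPl capG; apply/eqP => /(congr1 mxrank).
by rewrite capG mxrank0; apply/eqP; rewrite mxrank_eq0.
Qed.

Lemma min_dist_le_wt k n (G : 'M['F_2]_(k, n)) w :
  (w <= G)%MS -> w != 0 -> (min_dist G <= wt w)%N.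
Proof.
by move=> wG w_neq0; apply/bigmax_leqP => d /forallP /(_ w); rewrite wG w_neq0.
Qed.

Lemma LCD_ltn n k b : (0 < b)%N ->
    (forall G : 'M['F_2]_(k, n),
       \rank G = k -> is_LCD G -> (min_dist G < b)%N) ->
  (LCD n k < b)%N.
Proof.
case: b => // b _ dist_lt; rewrite ltnS; apply/bigmax_leqP => d.
by case/existsP => G /and3P [/eqP rkG LCD_G /eqP <-]; rewrite -ltnS dist_lt.
Qed.

Section TwoDimCode.

Variables (n : nat) (G : 'M['F_2]_(2, n)).

Lemma codeword2P w : (w <= G)%MS ->
  [\/ w = 0, w = row 0 G, w = row 1 G | w = row 0 G + row 1 G].
Proof.
case/submxP => D ->; rewrite mulmx_sum_row big_ord_recr big_ord1 /=.
have -> : widen_ord (leqnSn 1) ord0 = 0 :> 'I_2 by apply/val_inj.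
have -> : ord_max = 1 :> 'I_2 by apply/val_inj.
by case: (F2_cases (D 0 0)) => ->; case: (F2_cases (D 0 1)) => ->;
  rewrite ?scale0r ?scale1r ?addr0 ?add0r;
  [apply: Or41 | apply: Or43 | apply: Or42 | apply: Or44].
Qed.

Hypothesis G_free : row_free G.

Lemma rows2_neq0 : [/\ row 0 G != 0, row 1 G != 0 & row 0 G + row 1 G != 0].
Proof.
have coord_neq0 (D : 'rV_2) i : D 0 i != 0 -> D *m G != 0.
  move=> Di; rewrite mulmx_free_eq0 //.
  by apply: contraNneq Di => ->; rewrite mxE.
have ord2_neq : (0 == 1 :> 'I_2) = false by [].
rewrite !rowE -mulmxDl; split;
  [apply: (coord_neq0 _ 0) | apply: (coord_neq0 _ 1) | apply: (coord_neq0 _ 0)];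
  by rewrite !mxE ?eqxx ?ord2_neq ?addr0 ?oner_neq0.
Qed.

End TwoDimCode.

Lemma two_dim_doubly_even m (G : 'M['F_2]_(2, 6 * m)) :
    row_free G -> (4 * m <= min_dist G)%N ->
  forall w, (w <= G)%MS -> (4 %| wt w)%N.
Proof.
move=> G_free dist_ge; case: (rows2_neq0 G_free) => u_neq0 v_neq0 uv_neq0.
have heavy w : (w <= G)%MS -> w != 0 -> (4 * m <= wt w)%N.
  by move=> wG w_neq0; apply: leq_trans dist_ge (min_dist_le_wt wG w_neq0).
have [wt_u wt_v wt_uv] := wt_heavy_triple
  (heavy _ (row_sub 0 G) u_neq0) (heavy _ (row_sub 1 G) v_neq0)
  (heavy _ (addmx_sub (row_sub 0 G) (row_sub 1 G)) uv_neq0).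
move=> w /codeword2P [] ->;
  by rewrite ?wt0 ?wt_u ?wt_v ?wt_uv ?dvdn0 ?dvdn_mulr.
Qed.

Theorem proposition2p4 (r : nat) : (LCD (6 * r + 6) 2 < 4 * r + 4)%N.
Proof.
rewrite -!mulnSr.
apply: LCD_ltn => // G rkG; apply: contraLR; rewrite -leqNgt => dist_ge.
have G_free : row_free G by rewrite /row_free rkG.
have G_neq0 : G != 0 by rewrite -mxrank_eq0 rkG.
exact/self_orthogonal_not_LCD/doubly_even_self_orthogonal/two_dim_doubly_even.
Qed.
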